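(* Let $t$ be an indeterminate and define polynomials $P_n,Y_n\in\mathbb{Z}[t]$ by $P_0=Y_0=1$ and, for $n\ge1$, $$P_n=(2t+1)P_{n-1}+2t(t+1)Y_{n-1},\qquad Y_n=2P_{n-1}+(2t+1)Y_{n-1}.$$ Put $y_n=\tfrac12(Y_n-1)$ and $$q_n=\frac{(P_n-Y_n)\big((2t^2+4t+1)Y_n+(2t+3)P_n\big)}{4(t^2+t-1)}.$$ Then for every $n\ge0$: $y_n\in\mathbb{Z}[t]$, $q_n\in\mathbb{Z}[t]$, $t(t+1)\,y_n(y_n+1)=p_n(p_n+1)$ with $p_n=\tfrac12(P_n-1)\in\mathbb{Z}[t]$, and $$y_n(y_n+1)\,y_{n+1}(y_{n+1}+1)=q_n(q_n+1).$$ *)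

From HB Require Import structures.
From mathcomp Require Import all_boot all_order all_algebra.
Set Implicit Arguments. Unset Strict Implicit. Unset Printing Implicit Defensive.
Import Order.TTheory GRing.Theory Num.Theory.
Local Open Scope ring_scope.

Fixpoint PY (n : nat) : {poly int} * {poly int} :=
  match n with
  | 0%N => (1, 1)
  | m.+1 =>
      let: (P, Y) := PY m in
      ((2%:P * 'X + 1) * P + 2%:P * 'X * ('X + 1) * Y,
       2%:P * P + (2%:P * 'X + 1) * Y)
  end.

Definition Ppol (n : nat) : {poly int} := (PY n).1.
Definition Ypol (n : nat) : {poly int} := (PY n).2.

From HB Require Import structures.
From mathcomp Require Import all_boot all_order all_algebra.
From mathcomp Require Import ring.
Set Implicit Arguments. Unset Strict Implicit. Unset Printing Implicit Defensive.
Import GRing.Theory.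
Local Open Scope ring_scope.

(* Writing P = 2p + 1 and Y = 2y + 1, the relation t(t+1) y(y+1) = p(p+1) is the
   Pell-type equation P^2 - t(t+1) Y^2 = 1 - t(t+1), and the recurrence multiplies
   P + Y sqrt(t(t+1)) by (2t+1) + 2 sqrt(t(t+1)), which has norm 1; hence the relation
   holds for all n.  Both claims about q_n are polynomial identities in t, p_n, y_n
   modulo this relation. *)

Lemma eq_modulo (R : comPzRingType) (u v a b c : R) :
  u = v -> a - b = c * (u - v) -> a = b.
Proof. by move=> -> /eqP; rewrite subrr mulr0 subr_eq0 => /eqP. Qed.

Section PellStep.

Variables (R : comPzRingType) (t p y : R).

Definition step_p := (2 * t + 1) * p + 2 * t * (t + 1) * y + t ^+ 2 + 2 * t.
Definition step_y := 2 * p + (2 * t + 1) * y + t + 1.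
Definition pell_q := (2 * t + 1) * (y * (y + 1)) + 2 * p * y + p + y.

Lemma step_P_odd :
  (2 * t + 1) * (2 * p + 1) + 2 * t * (t + 1) * (2 * y + 1) = 2 * step_p + 1.
Proof. rewrite /step_p; ring. Qed.

Lemma step_Y_odd : 2 * (2 * p + 1) + (2 * t + 1) * (2 * y + 1) = 2 * step_y + 1.
Proof. rewrite /step_y; ring. Qed.

Hypothesis pell : t * (t + 1) * (y * (y + 1)) = p * (p + 1).

Lemma pell_step : t * (t + 1) * (step_y * (step_y + 1)) = step_p * (step_p + 1).
Proof. by apply: (eq_modulo (c := 1) pell); rewrite /step_p /step_y; ring. Qed.

Lemma pell_q_denominator :
  4 * (t ^+ 2 + t - 1) * pell_q
  = ((2 * p + 1) - (2 * y + 1))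
    * ((2 * t ^+ 2 + 4 * t + 1) * (2 * y + 1) + (2 * t + 3) * (2 * p + 1)).
Proof. by apply: (eq_modulo (c := 4 * (2 * t + 3)) pell); rewrite /pell_q; ring. Qed.

Lemma pell_q_product : y * (y + 1) * (step_y * (step_y + 1)) = pell_q * (pell_q + 1).
Proof. by apply: (eq_modulo (c := 1) pell); rewrite /pell_q /step_y; ring. Qed.

End PellStep.

Lemma PY_succ n :
  Ppol n.+1 = (2 * 'X + 1) * Ppol n + 2 * 'X * ('X + 1) * Ypol n
  /\ Ypol n.+1 = 2 * Ppol n + (2 * 'X + 1) * Ypol n.
Proof. by rewrite /Ppol /Ypol /= polyC_natr; case: (PY n). Qed.

Lemma PY_odd_pell n : exists p y : {poly int},
  [/\ Ppol n = 2 * p + 1, Ypol n = 2 * y + 1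
    & 'X * ('X + 1) * (y * (y + 1)) = p * (p + 1)].
Proof.
elim: n => [|n [p [y [hP hY hpell]]]].
  by exists 0, 0; rewrite /Ppol /Ypol /= !(mul0r, mulr0, add0r).
have [-> ->] := PY_succ n.
exists (step_p 'X p y), (step_y 'X p y).
by rewrite hP hY step_P_odd step_Y_odd pell_step.
Qed.

Theorem mainTheorem6 (n : nat) :
  exists (y y' p q : {poly int}),
    Ypol n = 2%:P * y + 1 /\
        Ypol n.+1 = 2%:P * y' + 1 /\
        Ppol n = 2%:P * p + 1 /\
        4%:P * ('X ^+ 2 + 'X - 1) * q
          = (Ppol n - Ypol n)
            * ((2%:P * 'X ^+ 2 + 4%:P * 'X + 1) * Ypol n
               + (2%:P * 'X + 3%:P) * Ppol n) /\
        'X * ('X + 1) * (y * (y + 1)) = p * (p + 1) /\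
        y * (y + 1) * (y' * (y' + 1)) = q * (q + 1).
Proof.
have [p [y [hP hY hpell]]] := PY_odd_pell n.
have [_ hY'] := PY_succ n.
exists y, (step_y 'X p y), p, (pell_q 'X p y); rewrite !polyC_natr.
split; first exact: hY.
split; first by rewrite hY' hP hY step_Y_odd.
split; first exact: hP.
split; first by rewrite hP hY (pell_q_denominator hpell).
split; first exact: hpell.
exact: pell_q_product.
Qed.
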